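(* Consider the family of differential operators $T_\lambda=Q_2(z)\frac{d^2}{dz^2}+(Q_1(z)\lambda+P_1(z))\frac{d}{dz}+(\lambda^2+p\lambda+q)Q_0$ depending on $\lambda\in\mathbb C$, and assume it is of generic type. Then there exists a positive integer $N$ such that for every integer $n\ge N$ there are two values $\lambda_{1,n},\lambda_{2,n}$ of $\lambda$ for which $T_\lambda(y)=0$ has a polynomial solution of degree $n$, and $\lim_{n\to\infty}\lambda_{i,n}/n=\alpha_i$ ($i=1,2$), where $\alpha_1,\alpha_2$ are the roots of the characteristic polynomial $q_{22}+q_{11}t+q_{00}t^2$.
   Context: Here $Q_2$ is a polynomial of degree $2$, $Q_1,P_1$ are polynomials of degree at most $1$, $Q_0$ is a nonzero constant, $p,q\in\mathbb C$. Write $Q_i(z)=\sum_{j=0}^iq_{ji}z^j$ ($i=0,1,2$), with $q_{22}\ne0$, $q_{00}=Q_0\ne0$. The characteristic polynomial of $T_\lambda$ is $q_{22}+q_{11}t+q_{00}t^2$; the family is of generic type if its two roots have distinct arguments. *)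

(* The complex field is modelled by an arbitrary
   archimedean numeric algebraically closed field C (e.g. algC; any such
   field is an algebraically closed subfield of the complex numbers). *)
From HB Require Import structures.
From mathcomp Require Import all_boot all_order all_algebra.
Set Implicit Arguments. Unset Strict Implicit. Unset Printing Implicit Defensive.
Import Order.TTheory GRing.Theory Num.Theory.
Local Open Scope ring_scope.

Definition Top (C : archiClosedFieldType) (Q2 Q1 P1 : {poly C}) (Q0 p q : C)
  (lam : C) (y : {poly C}) : {poly C} :=
  Q2 * y^`(2) + (lam *: Q1 + P1) * y^`() + ((lam ^+ 2 + p * lam + q) * Q0) *: y.

Definition charpoly_T (C : archiClosedFieldType) (Q2 Q1 : {poly C}) (Q0 : C)
  : {poly C} :=
  (Q2`_2)%:P + Q1`_1 *: 'X + Q0 *: 'X^2.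

Definition same_arg (C : archiClosedFieldType) (a b : C) : bool :=
  a / `|a| == b / `|b|.

Definition converges_to (C : archiClosedFieldType) (u : nat -> C) (l : C) : Prop :=
  forall e : C, 0 < e -> exists M : nat, forall n : nat, (M <= n)%N -> `|u n - l| < e.

From HB Require Import structures.
From mathcomp Require Import all_boot all_order all_algebra.
From mathcomp Require Import ring.
Import Order.TTheory GRing.Theory Num.Theory.
Set Implicit Arguments. Unset Strict Implicit. Unset Printing Implicit Defensive.
Local Open Scope ring_scope.

(* In the monomial basis T_lambda is upper triangular: the coefficient of X^j in
   T_lambda y is Q0 * eigen_quad j lambda * y_j plus multiples of y_(j+1) and y_(j+2),
   where, by Vieta, eigen_quad j lambda = (lambda - alpha1 j)(lambda - alpha2 j)
   + p lambda + c j + q with c = P1_1 / Q0 - alpha1 alpha2.  So a polynomial solution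
   of degree n forces eigen_quad n lambda = 0, and exists when moreover
   eigen_quad j lambda <> 0 for all j < n.  With the right branch of the square root the
   two roots of eigen_quad n are alpha_i n + O(1).  They are not roots of eigen_quad j,
   j < n, once n is large: eigen_quad j lambda - eigen_quad n lambda
   = (n - j)(alpha1 (alpha1 n - alpha2 j) + O(1)), and because alpha1 and alpha2 have
   distinct arguments, |alpha1 n - alpha2 j| >= const * n for all 0 <= j < n. *)

Lemma size_poly_leq_coef0 (R : nzSemiRingType) (g : {poly R}) k :
  (size g <= k.+1)%N -> g`_k = 0 -> (size g <= k)%N.
Proof.
move/leq_sizeP=> gk1 gk0; apply/leq_sizeP=> j.
by rewrite leq_eqVlt => /predU1P [<- //|]; apply: gk1.
Qed.

Section TriangularOperator.
Variables (F : fieldType) (T : {linear {poly F} -> {poly F}}) (d : nat -> F).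
Hypothesis size_T : forall m (y : {poly F}), (size y <= m)%N -> (size (T y) <= m)%N.
Hypothesis coef_T_top :
  forall m (y : {poly F}), (size y <= m.+1)%N -> (T y)`_m = d m * y`_m.

Lemma triangular_onto k : (forall j, (j < k)%N -> d j != 0) ->
  forall g : {poly F}, (size g <= k)%N -> exists2 u : {poly F}, (size u <= k)%N & T u = g.
Proof.
elim: k => [|k IHk] d_neq0 g size_g.
  exists 0; rewrite ?size_poly0 // linear0.
  by move: size_g; rewrite leqn0 size_poly_eq0 => /eqP.
pose c := g`_k / d k.
have size_cXk : (size (c *: 'X^k) <= k.+1)%N.
  by rewrite (leq_trans (size_scale_leq _ _)) // size_polyXn.
have size_rest : (size (g - T (c *: 'X^k))%R <= k)%N.
  apply: size_poly_leq_coef0.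
    by rewrite (leq_trans (size_polyD _ _)) // geq_max (leq_trans size_g) // size_polyN size_T.
  by rewrite coefB coef_T_top // coefZ coefXn eqxx mulr1 mulrC divfK ?subrr ?d_neq0.
have [u size_u Tu] := IHk (fun j jk => d_neq0 j (ltnW jk)) _ size_rest.
exists (u + c *: 'X^k); last by rewrite linearD Tu subrK.
by rewrite (leq_trans (size_polyD _ _)) // geq_max (leq_trans size_u).
Qed.

Lemma triangular_kernel_diag n (y : {poly F}) : size y = n.+1 -> T y = 0 -> d n = 0.
Proof.
move=> size_y Ty0; have lead_y : y`_n != 0.
  by rewrite -[n]/(n.+1.-1) -size_y -lead_coefE lead_coef_eq0 -size_poly_eq0 size_y.
by apply/eqP; rewrite -(mulIr_eq0 _ (mulIf lead_y)) -coef_T_top ?size_y // Ty0 coef0.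
Qed.

Lemma triangular_kernel_exists n : (forall j, (j < n)%N -> d j != 0) -> d n = 0 ->
  exists y : {poly F}, size y = n.+1 /\ T y = 0.
Proof.
move=> d_neq0 dn0; have [|u size_u Tu] := triangular_onto d_neq0 (g := T 'X^n).
  apply: size_poly_leq_coef0; first by rewrite size_T ?size_polyXn.
  by rewrite coef_T_top ?size_polyXn // dn0 mul0r.
exists ('X^n - u); rewrite linearB Tu subrr; split => //.
by rewrite size_polyDl size_polyXn // size_polyN ltnS.
Qed.

End TriangularOperator.

Lemma size2_polyE (R : nzSemiRingType) (P : {poly R}) : (size P <= 2)%N ->
  P = (P`_0)%:P + P`_1 *: 'X.
Proof.
move=> size_P; apply/polyP=> i; rewrite !coefD coefC !coefZ coefX.
case: i => [|[|i]] /=; rewrite ?mulr0 ?mulr1 ?addr0 ?add0r //.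
by move/leq_sizeP: size_P => ->.
Qed.

Lemma size3_polyE (R : nzSemiRingType) (P : {poly R}) : (size P <= 3)%N ->
  P = (P`_0)%:P + P`_1 *: 'X + P`_2 *: 'X^2.
Proof.
move=> size_P; apply/polyP=> i; rewrite !coefD coefC !coefZ coefX coefXn.
case: i => [|[|[|i]]] /=; rewrite ?mulr0 ?mulr1 ?addr0 ?add0r //.
by move/leq_sizeP: size_P => ->.
Qed.

Section Operator.
Variables (C : archiClosedFieldType) (Q2 Q1 P1 : {poly C}) (Q0 p q lam : C).

Definition Top_diag (j : nat) : C :=
  Q2`_2 * (j * j.-1)%:R + (lam * Q1`_1 + P1`_1) * j%:R + (lam ^+ 2 + p * lam + q) * Q0.

Lemma Top_is_linear : linear (Top Q2 Q1 P1 Q0 p q lam).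
Proof. by move=> a u v; rewrite /Top !linearP /= -!mul_polyC; ring. Qed.

HB.instance Definition _ :=
  GRing.isLinear.Build C {poly C} {poly C} _ (Top Q2 Q1 P1 Q0 p q lam) Top_is_linear.

Hypotheses (size_Q2 : (size Q2 <= 3)%N) (size_Q1 : (size Q1 <= 2)%N)
  (size_P1 : (size P1 <= 2)%N).

Lemma coef_Top (y : {poly C}) j :
  (Top Q2 Q1 P1 Q0 p q lam y)`_j = Top_diag j * y`_j
    + (Q2`_1 * (j.+1 * j)%:R + (lam * Q1`_0 + P1`_0) * j.+1%:R) * y`_j.+1
    + Q2`_0 * (j.+2 * j.+1)%:R * y`_j.+2.
Proof.
rewrite /Top {1}(size3_polyE size_Q2) {1}(size2_polyE size_Q1) {1}(size2_polyE size_P1) /Top_diag.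
rewrite !(scalerDr, mulrDl, scalerA) -!scalerAl !coefD !coefZ !coefCM !coefXM coefXnM.
rewrite !derivnS derivn0 !coef_deriv.
by case: j => [|[|j]] /=; rewrite ?subSS ?subn0; ring.
Qed.

Lemma size_Top m (y : {poly C}) :
  (size y <= m)%N -> (size (Top Q2 Q1 P1 Q0 p q lam y) <= m)%N.
Proof.
move/leq_sizeP=> y_m; apply/leq_sizeP=> j jm.
by rewrite coef_Top !y_m ?mulr0 ?addr0 // (leq_trans jm) // leqW.
Qed.

Lemma coef_Top_top m (y : {poly C}) :
  (size y <= m.+1)%N -> (Top Q2 Q1 P1 Q0 p q lam y)`_m = Top_diag m * y`_m.
Proof. by move/leq_sizeP=> y_m; rewrite coef_Top (y_m m.+1) ?(y_m m.+2) ?mulr0 ?addr0. Qed.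

End Operator.

Lemma charpoly_T_vieta (C : archiClosedFieldType) (Q2 Q1 : {poly C}) (Q0 a1 a2 : C) :
  charpoly_T Q2 Q1 Q0 = Q0 *: (('X - a1%:P) * ('X - a2%:P)) ->
  Q2`_2 = Q0 * (a1 * a2) /\ Q1`_1 = - (Q0 * (a1 + a2)).
Proof.
have -> : ('X - a1%:P) * ('X - a2%:P) = (a1 * a2)%:P - (a1 + a2) *: 'X + 'X^2 :> {poly C}.
  by rewrite -mul_polyC polyCD polyCM; ring.
move=> /polyP chi; move: (chi 1%N) (chi 0%N).
rewrite /charpoly_T !(coefD, coefN, coefZ, coefC, coefX, coefXn) /=.
rewrite !(mulr0, mulr1, addr0, add0r, subr0, sub0r, oppr0) => chi1 chi0.
by rewrite chi0 chi1 mulrN.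
Qed.

Definition eigen_quad (R : comNzRingType) (a1 a2 p c q N lam : R) : R :=
  (lam - a1 * N) * (lam - a2 * N) + p * lam + c * N + q.

Lemma eigen_quad_sym (R : comNzRingType) (a1 a2 p c q N lam : R) :
  eigen_quad a1 a2 p c q N lam = eigen_quad a2 a1 p c q N lam.
Proof. by rewrite /eigen_quad mulrC. Qed.

Section TopSpectrum.
Variables (C : archiClosedFieldType) (Q2 Q1 P1 : {poly C}) (Q0 p q a1 a2 : C).
Hypotheses (size_Q2 : (size Q2 <= 3)%N) (size_Q1 : (size Q1 <= 2)%N)
  (size_P1 : (size P1 <= 2)%N) (Q0_neq0 : Q0 != 0).
Hypotheses (q22E : Q2`_2 = Q0 * (a1 * a2)) (q11E : Q1`_1 = - (Q0 * (a1 + a2))).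
Local Notation c := (P1`_1 / Q0 - a1 * a2).

Lemma Top_diag_eigen_quad lam j :
  Top_diag Q2 Q1 P1 Q0 p q lam j = Q0 * eigen_quad a1 a2 p c q j%:R lam.
Proof.
by rewrite /Top_diag /eigen_quad q22E q11E; case: j => [|j] /=; rewrite ?natrM; field.
Qed.

Lemma Top_kernel_eigen_quad lam n :
  (exists y : {poly C}, size y = n.+1 /\ Top Q2 Q1 P1 Q0 p q lam y = 0) ->
  eigen_quad a1 a2 p c q n%:R lam = 0.
Proof.
have coef_T_top := coef_Top_top Q0 p q lam size_Q2 size_Q1 size_P1.
case=> y [size_y /(triangular_kernel_diag coef_T_top size_y)].
by rewrite Top_diag_eigen_quad => /eqP; rewrite mulf_eq0 (negPf Q0_neq0) => /eqP.
Qed.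

Lemma Top_kernel_exists lam n :
  (forall j, (j < n)%N -> eigen_quad a1 a2 p c q j%:R lam != 0) ->
  eigen_quad a1 a2 p c q n%:R lam = 0 ->
  exists y : {poly C}, size y = n.+1 /\ Top Q2 Q1 P1 Q0 p q lam y = 0.
Proof.
move=> below_neq0 root_n.
apply: (triangular_kernel_exists (size_Top Q0 p q lam size_Q2 size_Q1 size_P1)
                                 (coef_Top_top Q0 p q lam size_Q2 size_Q1 size_P1)).
  by move=> j j_lt_n; rewrite Top_diag_eigen_quad mulf_neq0 ?below_neq0.
by rewrite Top_diag_eigen_quad root_n mulr0.
Qed.

End TopSpectrum.

Section EigenQuadRoots.
Variables (C : numClosedFieldType) (a1 a2 p c q : C).

Definition eigen_discr (N : C) : C :=
  ((a1 + a2) * N - p) ^+ 2 - 4 * (a1 * a2 * N ^+ 2 + c * N + q).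

(* The square root closer to (a1 - a2) N: this branch keeps eig_i N - a_i N bounded. *)
Definition eigen_sqrt (N : C) : C :=
  let w := sqrtC (eigen_discr N) in
  if `|w - (a1 - a2) * N| <= `|w + (a1 - a2) * N| then w else - w.

Definition eig1 (N : C) : C := ((a1 + a2) * N - p + eigen_sqrt N) / 2.
Definition eig2 (N : C) : C := ((a1 + a2) * N - p - eigen_sqrt N) / 2.

Lemma eigen_sqrtK N : eigen_sqrt N ^+ 2 = eigen_discr N.
Proof. by rewrite /eigen_sqrt; case: ifP; rewrite ?sqrrN sqrtCK. Qed.

Lemma eigen_sqrt_closer N :
  `|eigen_sqrt N - (a1 - a2) * N| <= `|eigen_sqrt N + (a1 - a2) * N|.
Proof.
rewrite /eigen_sqrt; set w := sqrtC _; case: ifP => // /negbT.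
rewrite -real_ltNge ?normr_real // => /ltW.
have -> : - w + (a1 - a2) * N = - (w - (a1 - a2) * N) by rewrite opprB addrC.
by rewrite -opprD !normrN.
Qed.

Lemma eigen_quad_factor N lam :
  eigen_quad a1 a2 p c q N lam = (lam - eig1 N) * (lam - eig2 N).
Proof.
apply/eqP; rewrite -subr_eq0; apply/eqP.
have -> : eigen_quad a1 a2 p c q N lam - (lam - eig1 N) * (lam - eig2 N)
          = (eigen_sqrt N ^+ 2 - eigen_discr N) / 4.
  by rewrite /eigen_quad /eig1 /eig2 /eigen_discr; field.
by rewrite eigen_sqrtK subrr mul0r.
Qed.

Lemma eigen_quad_eig1 N : eigen_quad a1 a2 p c q N (eig1 N) = 0.
Proof. by rewrite eigen_quad_factor subrr mul0r. Qed.

Lemma eigen_quad_eig2 N : eigen_quad a1 a2 p c q N (eig2 N) = 0.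
Proof. by rewrite eigen_quad_factor subrr mulr0. Qed.

Hypothesis a1_neq_a2 : a1 != a2.

Lemma eigen_sqrt_near :
  exists2 M, 0 <= M & forall N, 1 <= N -> `|eigen_sqrt N - (a1 - a2) * N| <= M.
Proof.
set v := eigen_sqrt; set d := a1 - a2.
set A := - (2 * (a1 + a2) * p + 4 * c); set B := p ^+ 2 - 4 * q.
have d_gt0 : 0 < `|d| by rewrite normr_gt0 subr_eq0.
exists ((`|A| + `|B|) / `|d|); first by rewrite divr_ge0 ?addr_ge0.
move=> N N_ge1; have N_gt0 : 0 < N by rewrite (lt_le_trans ltr01).
have vE : (v N - d * N) * (v N + d * N) = A * N + B.
  rewrite -subr_sqr /v eigen_sqrtK /eigen_discr /A /B /d; ring.
have dN_le : `|d * N| <= `|v N + d * N|.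
  have : `|2 * (d * N)| <= 2 * `|v N + d * N|.
    have -> : 2 * (d * N) = (v N + d * N) - (v N - d * N) by ring.
    rewrite (le_trans (ler_normB _ _)) // mulr_natl mulr2n lerD2l.
    exact: eigen_sqrt_closer.
  by rewrite normrM normr_nat ler_pM2l.
rewrite ler_pdivlMr // -(ler_pM2r N_gt0) -[_ * `|d| * N]mulrA.
have -> : `|d| * N = `|d * N| by rewrite normrM (gtr0_norm N_gt0).
rewrite (le_trans (ler_wpM2l _ dN_le)) // -normrM vE.
rewrite (le_trans (ler_normD _ _)) // mulrDl normrM (gtr0_norm N_gt0) lerD2l.
by rewrite ler_peMr.
Qed.

Lemma eig_near : exists2 E, 0 <= E &
  forall N, 1 <= N -> `|eig1 N - a1 * N| <= E /\ `|eig2 N - a2 * N| <= E.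
Proof.
have [M M_ge0 near_M] := eigen_sqrt_near.
exists ((M + `|p|) / 2); first by rewrite divr_ge0 ?addr_ge0.
move=> N /near_M sqrt_near.
have -> : eig1 N - a1 * N = (eigen_sqrt N - (a1 - a2) * N - p) / 2.
  by rewrite /eig1; field.
have -> : eig2 N - a2 * N = - (eigen_sqrt N - (a1 - a2) * N + p) / 2.
  by rewrite /eig2; field.
rewrite !normf_div normrN normr_nat !ler_pM2r ?invr_gt0 ?ltr0n //.
by split; [rewrite (le_trans (ler_normB _ _)) | rewrite (le_trans (ler_normD _ _))];
  rewrite ?lerD2r.
Qed.
End EigenQuadRoots.

Lemma ler_dist_rays (R : numFieldType) (a b x y : R) : a != 0 -> b != 0 ->
  0 <= x -> 0 <= y -> `|a| * x * `|a / `|a| - b / `|b| | <= 2 * `|a * x - b * y|.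
Proof.
move=> a_neq0 b_neq0 x_ge0 y_ge0.
have na_neq0 : `|a| != 0 by rewrite normr_eq0.
have nb_neq0 : `|b| != 0 by rewrite normr_eq0.
have -> : `|a| * x * `|a / `|a| - b / `|b| | = `|(a * x - b * y) + (`|b| * y - `|a| * x) * (b / `|b|)|.
  rewrite -{1}(ger0_norm (mulr_ge0 (normr_ge0 a) x_ge0)) -normrM.
  by congr `|_|; field; apply/andP.
rewrite (le_trans (ler_normD _ _)) // normrM normf_div normr_id divff // mulr1.
rewrite mulr_natl mulr2n lerD2l distrC.
by have := ler_dist_dist (a * x) (b * y); rewrite !normrM (ger0_norm x_ge0) (ger0_norm y_ge0).
Qed.

Lemma eigen_quad_root_isolated (R : numFieldType) (a1 a2 p c q N J lam E : R) :
  a1 != 0 -> a2 != 0 -> 0 <= N -> 0 <= J -> N != J ->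
  eigen_quad a1 a2 p c q N lam = 0 -> `|lam - a1 * N| <= E ->
  2 * (`|a1 + a2| * E + `|c|) < `|a1| ^+ 2 * N * `|a1 / `|a1| - a2 / `|a2| | ->
  eigen_quad a1 a2 p c q J lam != 0.
Proof.
move=> a1_neq0 a2_neq0 N_ge0 J_ge0 N_neq_J root_N lam_near N_large.
have -> : eigen_quad a1 a2 p c q J lam = eigen_quad a1 a2 p c q N lam
    + (N - J) * (a1 * (a1 * N - a2 * J) + ((a1 + a2) * (lam - a1 * N) - c)).
  by rewrite /eigen_quad; ring.
rewrite root_N add0r mulf_neq0 ?subr_eq0 // addr_eq0; apply/negP => /eqP balance.
have : `|a1| ^+ 2 * N * `|a1 / `|a1| - a2 / `|a2| | <= 2 * `|a1 * (a1 * N - a2 * J)|.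
  rewrite normrM expr2 -!mulrA [in leRHS]mulrCA ler_wpM2l // mulrA.
  exact: ler_dist_rays.
rewrite balance normrN => /(lt_le_trans N_large); rewrite ltr_pM2l ?ltr0n //.
have bound : `|(a1 + a2) * (lam - a1 * N) - c| <= `|a1 + a2| * E + `|c|.
  by rewrite (le_trans (ler_normB _ _)) // lerD2r normrM ler_wpM2l.
by move=> /lt_le_trans /(_ bound); rewrite ltxx.
Qed.

Definition eventually (P : nat -> Prop) : Prop :=
  exists N0 : nat, forall n, (N0 <= n)%N -> P n.

Lemma eventually_and (P Q : nat -> Prop) :
  eventually P -> eventually Q -> eventually (fun n => P n /\ Q n).
Proof.
move=> [NP HP] [NQ HQ]; exists (maxn NP NQ) => n.
by rewrite geq_max => /andP [/HP ? /HQ ?].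
Qed.

Lemma eventually_gtr (R : archiNumDomainType) (K : R) :
  0 <= K -> eventually (fun n => K < n%:R).
Proof.
move=> K_ge0; exists (Num.bound K) => n bound_n.
by rewrite (lt_le_trans (archi_boundP K_ge0)) // ler_nat.
Qed.

Lemma converges_to_offset (C : archiClosedFieldType) (u : nat -> C) (a E : C) :
  (forall n, (0 < n)%N -> `|u n - a * n%:R| <= E) ->
  converges_to (fun n => u n / n%:R) a.
Proof.
move=> near_u e e_gt0; have E_ge0 := le_trans (normr_ge0 _) (near_u 1%N isT).
have [N0 HN0] := eventually_gtr (divr_ge0 E_ge0 (ltW e_gt0)).
exists N0.+1 => n N0_lt_n; have n_gt0 : (0 < n)%N := leq_ltn_trans (leq0n N0) N0_lt_n.
have n_pos : 0 < (n%:R : C) by rewrite ltr0n.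
have -> : u n / n%:R - a = (u n - a * n%:R) / n%:R by field; rewrite gt_eqF.
rewrite normf_div (gtr0_norm n_pos) ltr_pdivrMr // (le_lt_trans (near_u n n_gt0)) //.
by rewrite mulrC -ltr_pdivrMr // HN0 // ltnW.
Qed.

Lemma eventually_root_isolated (C : archiClosedFieldType) (a1 a2 p c q E : C)
    (r : nat -> C) :
  a1 != 0 -> a2 != 0 -> ~~ same_arg a1 a2 ->
  (forall n, eigen_quad a1 a2 p c q n%:R (r n) = 0) ->
  (forall n, (0 < n)%N -> `|r n - a1 * n%:R| <= E) ->
  eventually (fun n => forall j, (j < n)%N -> eigen_quad a1 a2 p c q j%:R (r n) != 0).
Proof.
move=> a1_neq0 a2_neq0 not_same root_r near_r.
set eta := `|a1 / `|a1| - a2 / `|a2| |.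
have scale_gt0 : 0 < `|a1| ^+ 2 * eta.
  by rewrite mulr_gt0 ?exprn_gt0 ?normr_gt0 // subr_eq0.
have E_ge0 := le_trans (normr_ge0 _) (near_r 1%N isT).
have [N0 HN0] : eventually (fun n => 2 * (`|a1 + a2| * E + `|c|) / (`|a1| ^+ 2 * eta) < n%:R).
  by apply: eventually_gtr; rewrite divr_ge0 ?(ltW scale_gt0) ?mulr_ge0 ?addr_ge0 ?mulr_ge0.
exists N0.+1 => n N0_lt_n j j_lt_n.
apply: (eigen_quad_root_isolated _ _ _ _ _ (root_r n) (near_r n _)) => //.
- by rewrite eqr_nat gtn_eqF.
- exact: leq_ltn_trans (leq0n N0) N0_lt_n.
by rewrite mulrAC [ltRHS]mulrC -ltr_pdivrMr // HN0 // ltnW.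
Qed.

Lemma eventually_eig_neq (C : archiClosedFieldType) (a1 a2 p c q : C) :
  a1 != a2 -> eventually (fun n => eig1 a1 a2 p c q n%:R != eig2 a1 a2 p c q n%:R).
Proof.
move=> a1_neq_a2; have [E E_ge0 near] := eig_near p c q a1_neq_a2.
have d_gt0 : 0 < `|a1 - a2| by rewrite normr_gt0 subr_eq0.
have [N0 HN0] := eventually_gtr (divr_ge0 (mulr_ge0 (ler0n C 2) E_ge0) (ltW d_gt0)).
exists N0.+1 => n N0_lt_n; apply/negP => /eqP eig_eq.
have n_ge1 : 1 <= (n%:R : C) by rewrite ler1n (leq_ltn_trans (leq0n N0) N0_lt_n).
have [near1 near2] := near _ n_ge1.
have : `|(a1 - a2) * n%:R| <= 2 * E.
  have -> : (a1 - a2) * n%:R = (eig2 a1 a2 p c q n%:R - a2 * n%:R) - (eig1 a1 a2 p c q n%:R - a1 * n%:R).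
    by rewrite eig_eq; ring.
  by rewrite (le_trans (ler_normB _ _)) // mulr_natl mulr2n lerD.
rewrite normrM normr_nat mulrC -ler_pdivlMr //.
by move=> /le_lt_trans /(_ (HN0 n (ltnW N0_lt_n))); rewrite ltxx.
Qed.

Lemma eventually_eig_simple (C : archiClosedFieldType) (a1 a2 p c q : C) :
  a1 != 0 -> a2 != 0 -> ~~ same_arg a1 a2 ->
  eventually (fun n => eig1 a1 a2 p c q n%:R != eig2 a1 a2 p c q n%:R /\
    forall j, (j < n)%N -> eigen_quad a1 a2 p c q j%:R (eig1 a1 a2 p c q n%:R) != 0 /\
                           eigen_quad a1 a2 p c q j%:R (eig2 a1 a2 p c q n%:R) != 0).
Proof.
move=> a1_neq0 a2_neq0 not_same.
have a12 : a1 != a2 by apply: contraNneq not_same => ->; rewrite /same_arg.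
have [E _ near] := eig_near p c q a12.
have near_n n : (0 < n)%N -> `|eig1 a1 a2 p c q n%:R - a1 * n%:R| <= E /\
                             `|eig2 a1 a2 p c q n%:R - a2 * n%:R| <= E.
  by move=> n_gt0; apply: near; rewrite ler1n.
have root2 n : eigen_quad a2 a1 p c q n%:R (eig2 a1 a2 p c q n%:R) = 0.
  by rewrite eigen_quad_sym eigen_quad_eig2.
have not_same21 : ~~ same_arg a2 a1 by rewrite /same_arg eq_sym.
have [N0 HN0] := eventually_and (eventually_eig_neq p c q a12) (eventually_and
  (eventually_root_isolated a1_neq0 a2_neq0 not_same (fun n => eigen_quad_eig1 _ _ _ _ _ _)
     (fun n n_gt0 => (near_n n n_gt0).1))
  (eventually_root_isolated a2_neq0 a1_neq0 not_same21 root2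
     (fun n n_gt0 => (near_n n n_gt0).2))).
exists N0 => n /HN0 [neq [iso1 iso2]]; split => // j j_lt_n.
by split; [apply: iso1 | rewrite eigen_quad_sym; apply: iso2].
Qed.

Lemma eig_asymptotics (C : archiClosedFieldType) (a1 a2 p c q : C) : a1 != a2 ->
  converges_to (fun n => eig1 a1 a2 p c q n%:R / n%:R) a1 /\
  converges_to (fun n => eig2 a1 a2 p c q n%:R / n%:R) a2.
Proof.
move=> a12; have [E _ near] := eig_near p c q a12.
by split; apply: (converges_to_offset (E := E)) => n n_gt0;
  have [] := near n%:R; rewrite ?ler1n.
Qed.

Unset Implicit Arguments.

Theorem lemma9 (C : archiClosedFieldType) (Q2 Q1 P1 : {poly C}) (Q0 p q : C)
  (alpha1 alpha2 : C) :
  size Q2 = 3%N -> (size Q1 <= 2)%N -> (size P1 <= 2)%N -> Q0 != 0 ->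
  charpoly_T Q2 Q1 Q0 = Q0 *: (('X - alpha1%:P) * ('X - alpha2%:P)) ->
  ~~ same_arg alpha1 alpha2 ->
  exists N : nat, (0 < N)%N /\
    exists lam1 lam2 : nat -> C,
      (forall n : nat, (N <= n)%N ->
         lam1 n != lam2 n /\
         forall lam : C,
           (exists y : {poly C}, size y = n.+1 /\ Top Q2 Q1 P1 Q0 p q lam y = 0)
           <-> (lam = lam1 n \/ lam = lam2 n)) /\
      converges_to (fun n => lam1 n / n%:R) alpha1 /\
      converges_to (fun n => lam2 n / n%:R) alpha2.
Proof.
move=> size_Q2 size_Q1 size_P1 Q0_neq0 chi not_same.
have size_Q2_le : (size Q2 <= 3)%N by rewrite size_Q2.
have [q22E q11E] := charpoly_T_vieta chi.
have q22_neq0 : Q2`_2 != 0.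
  by rewrite -[2%N]/(3.-1) -size_Q2 -lead_coefE lead_coef_eq0 -size_poly_eq0 size_Q2.
have a1_neq0 : alpha1 != 0.
  by apply: contraNneq q22_neq0; rewrite q22E => ->; rewrite !mul0r mulr0.
have a2_neq0 : alpha2 != 0 by apply: contraNneq q22_neq0; rewrite q22E => ->; rewrite !mulr0.
have a12 : alpha1 != alpha2 by apply: contraNneq not_same => ->; rewrite /same_arg.
set c := P1`_1 / Q0 - alpha1 * alpha2.
have [N0 HN0] := eventually_eig_simple p c q a1_neq0 a2_neq0 not_same.
exists N0.+1; split => //.
exists (fun n => eig1 alpha1 alpha2 p c q n%:R), (fun n => eig2 alpha1 alpha2 p c q n%:R).
split; last exact: eig_asymptotics.
move=> n /ltnW /HN0 [eig_neq isolated]; split => // lam; split.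
  move/(Top_kernel_eigen_quad size_Q2_le size_Q1 size_P1 Q0_neq0 q22E q11E).
  by rewrite eigen_quad_factor => /eqP; rewrite mulf_eq0 !subr_eq0 => /orP [] /eqP; tauto.
move=> lam_eig; apply: (Top_kernel_exists size_Q2_le size_Q1 size_P1 Q0_neq0 q22E q11E).
  by move=> j /isolated; case: lam_eig => -> [].
by case: lam_eig => ->; rewrite ?eigen_quad_eig1 ?eigen_quad_eig2.
Qed.
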